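(* Let $(X,\tau)$ be a topological space with an operation $\gamma$ on $\tau$. If $A$ is $\gamma^{*}$-semi-open and $A\subseteq B\subseteq X$, then $A\subseteq cl_\gamma(int_\gamma(B))$.
   Context: An operation on $\tau$ is a map $\gamma:\tau\to P(X)$, $V\mapsto V^\gamma$, with $V\subseteq V^\gamma$ for every $V\in\tau$. For $A\subseteq X$, $int_\gamma(A)=\{x\in A: \text{there is an open } N \text{ with } x\in N,\ N^\gamma\subseteq A\}$; $A$ is $\gamma$-open iff $A=int_\gamma(A)$. $cl_\gamma(A)$ is the set of $x\in X$ such that $U^\gamma\cap A\neq\emptyset$ for every open $U\ni x$. $A$ is $\gamma^{*}$-semi-open if there is a $\gamma$-open set $O$ with $O\subseteq A\subseteq cl_\gamma(O)$. *)

From mathcomp Require Import all_boot all_order.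
From mathcomp Require Import boolp classical_sets topology.
Set Implicit Arguments. Unset Strict Implicit. Unset Printing Implicit Defensive.
Local Open Scope classical_set_scope.

(* An operation gamma on the topology of X: maps each open set V to a set
   V^gamma with V `<=` V^gamma. (Values on non-open sets are irrelevant.) *)
Definition is_operation (X : topologicalType) (gamma : set X -> set X) : Prop :=
  forall V : set X, open V -> V `<=` gamma V.

Definition int_gamma (X : topologicalType) (gamma : set X -> set X) (A : set X)
  : set X :=
  [set x | A x /\ exists N : set X, [/\ open N, N x & gamma N `<=` A]].

Definition gamma_open (X : topologicalType) (gamma : set X -> set X) (A : set X)
  : Prop := A = int_gamma gamma A.

Definition cl_gamma (X : topologicalType) (gamma : set X -> set X) (A : set X)
  : set X :=
  [set x | forall U : set X, open U -> U x -> gamma U `&` A !=set0].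

Definition gamma_star_semi_open (X : topologicalType) (gamma : set X -> set X)
  (A : set X) : Prop :=
  exists O : set X, [/\ gamma_open gamma O, O `<=` A & A `<=` cl_gamma gamma O].

From mathcomp Require Import all_boot all_order.
From mathcomp Require Import boolp classical_sets topology.
Local Open Scope classical_set_scope.

(* If O is a gamma-open subset of A then O = int_gamma O is contained in
   int_gamma B for every B containing A, so A, which lies in cl_gamma O, lies in
   cl_gamma (int_gamma B) by monotonicity of cl_gamma. *)

Section GammaInteriorClosure.
Variables (X : topologicalType) (gamma : set X -> set X).

Lemma int_gamma_subset (A B : set X) :
  A `<=` B -> int_gamma gamma A `<=` int_gamma gamma B.
Proof.
move=> AB x [Ax [N [oN Nx gNA]]]; split; first exact: AB.
by exists N; split => // y /gNA /AB.
Qed.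

Lemma cl_gamma_subset (A B : set X) :
  A `<=` B -> cl_gamma gamma A `<=` cl_gamma gamma B.
Proof.
move=> AB x clAx U oU Ux.
have [y [gUy Ay]] := clAx U oU Ux.
by exists y; split => //; apply: AB.
Qed.

Lemma gamma_open_sub_int_gamma (O B : set X) :
  gamma_open gamma O -> O `<=` B -> O `<=` int_gamma gamma B.
Proof. by move=> oO OB; rewrite oO; apply: int_gamma_subset. Qed.

End GammaInteriorClosure.

Theorem lemma4p4 (X : topologicalType) (gamma : set X -> set X)
  (A B : set X) :
  is_operation gamma ->
  gamma_star_semi_open gamma A ->
  A `<=` B ->
  A `<=` cl_gamma gamma (int_gamma gamma B).
Proof.
move=> _ [O [oO OA AclO]] AB.
have OintB : O `<=` int_gamma gamma B.
  by apply: gamma_open_sub_int_gamma => // x /OA /AB.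
by move=> x /AclO; apply: cl_gamma_subset.
Qed.
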